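(* Consider one seller with one item and $n$ ex-post rational buyers $N=\{1,\dots,n\}$; the item's quality $q\in Q=[q_1,q_2]$ has density $g$ and is observed only by the seller; buyer $i$'s valuation $v_i(q)$ is monotone increasing in $q$ with inverse $v_i^{-1}$. A fixed-price signaling mechanism is a pair $(\pi,p)$ where, for each $q$, $\pi(q,\cdot)$ is a probability distribution over the signals $s_0,s_1,\dots,s_n$ ($\pi(q,s_i)\ge0$, $\sum_{i\in N}\pi(q,s_i)+\pi(q,s_0)=1$); signal $s_i$ means buyer $i$ receives ''1'' (buy) and all others receive ''0'', and $s_0$ means all buyers receive ''0''. Then $(\pi,p)$ is obedient for all buyers (each ex-post rational buyer, after Bayesian updating on his own received signal, is almost surely willing to buy after receiving 1 and almost surely unwilling after receiving 0) if and only if for all $i\in N$: $\int_{q_1}^{v_i^{-1}(p)}\pi(q,s_i)g(q)\,\mathrm{d}q=0$ and $\int_{v_i^{-1}(p)}^{q_2}[1-\pi(q,s_i)]g(q)\,\mathrm{d}q=0$.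
   Context: An ex-post rational buyer $i$ is willing to buy iff $v_i(q)\ge p$. Upon receiving 1, buyer $i$'s posterior density is $\pi(q,s_i)g(q)/\int_Q\pi(q',s_i)g(q')\,\mathrm{d}q'$; upon receiving 0 it is $[1-\pi(q,s_i)]g(q)/\int_Q[1-\pi(q',s_i)]g(q')\,\mathrm{d}q'$. *)

From HB Require Import structures.
From mathcomp Require Import all_boot all_order all_algebra.
From mathcomp Require Import all_classical all_reals all_analysis.
Set Implicit Arguments. Unset Strict Implicit. Unset Printing Implicit Defensive.
Import Order.TTheory GRing.Theory Num.Theory.
Local Open Scope classical_set_scope.
Local Open Scope ring_scope.

(* Signals: [None] = s_0 (everyone receives 0), [Some i] = s_i (buyer i
   receives 1, all others receive 0).  [pi q s] = pi(q, s). *)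

Definition signaling_scheme (R : realType) (n : nat) (q1 q2 : R)
    (pi : R -> option 'I_n -> R) : Prop :=
  forall q, q1 <= q <= q2 ->
    (forall s, 0 <= pi q s) /\ \sum_(i < n) pi q (Some i) + pi q None = 1.

Definition density_on (R : realType) (q1 q2 : R) (g : R -> R) : Prop :=
  measurable_fun `[q1, q2] g /\
  (forall q, q1 <= q <= q2 -> 0 <= g q) /\
  (\int[@lebesgue_measure R]_(q in `[q1, q2]) (g q)%:E = 1)%E.

Definition posterior1 (R : realType) (n : nat) (q1 q2 : R) (g : R -> R)
    (pi : R -> option 'I_n -> R) (i : 'I_n) (q : R) : R :=
  pi q (Some i) * g q /
  fine (\int[@lebesgue_measure R]_(x in `[q1, q2]) (pi x (Some i) * g x)%:E)%E.

Definition posterior0 (R : realType) (n : nat) (q1 q2 : R) (g : R -> R)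
    (pi : R -> option 'I_n -> R) (i : 'I_n) (q : R) : R :=
  (1 - pi q (Some i)) * g q /
  fine (\int[@lebesgue_measure R]_(x in `[q1, q2]) ((1 - pi x (Some i)) * g x)%:E)%E.

(* (pi, p) is obedient for all ex-post rational buyers (buyer i willing to buy
   iff v_i(q) >= p): after receiving 1, the posterior probability that
   v_i(q) < p (unwilling) is 0; after receiving 0, the posterior probability
   that v_i(q) >= p (willing) is 0. *)
Definition obedient (R : realType) (n : nat) (q1 q2 : R) (g : R -> R)
    (v : 'I_n -> R -> R) (pi : R -> option 'I_n -> R) (p : R) : Prop :=
  forall i : 'I_n,
    (\int[@lebesgue_measure R]_(q in `[q1, q2] `&` [set q | (v i q < p)%R])
        (posterior1 q1 q2 g pi i q)%:E = 0)%E /\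
    (\int[@lebesgue_measure R]_(q in `[q1, q2] `&` [set q | (p <= v i q)%R])
        (posterior0 q1 q2 g pi i q)%:E = 0)%E.

From HB Require Import structures.
From mathcomp Require Import all_boot all_order all_algebra.
From mathcomp Require Import all_classical all_reals all_analysis.
From mathcomp Require Import measurable_realfun.
Import Order.TTheory GRing.Theory Num.Theory.
Local Open Scope classical_set_scope.
Local Open Scope ring_scope.

(* Both posteriors are densities h g / c with h = pi(., s_i) or 1 - pi(., s_i)
   and normalising constant c = \int_Q h g, which is finite since 0 <= h <= 1
   and g is a probability density.  Dividing by c > 0 does not change whether
   an integral vanishes, and if c = 0 both sides vanish anyway.  Since v_i is
   strictly increasing, v_i(q) < p exactly when q < v_i^{-1}(p), so the two
   obedience conditions are integrals over Q cut at v_i^{-1}(p); the single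
   point v_i^{-1}(p) is Lebesgue-negligible. *)

Section normalized_integral.
Context d (T : measurableType d) (R : realType).
Variable mu : {measure set T -> \bar R}.

Lemma integral_normalized_eq0 (D L : set T) (f : T -> R) :
  measurable D -> measurable L -> L `<=` D -> measurable_fun D f ->
  (forall x, D x -> 0 <= f x) ->
  (\int[mu]_(x in D) (f x)%:E < +oo)%E ->
  (\int[mu]_(x in L) (f x / fine (\int[mu]_(x in D) (f x)%:E))%:E = 0)%E <->
  (\int[mu]_(x in L) (f x)%:E = 0)%E.
Proof.
move=> mD mL LD mf f0 Ifin; set I := (\int[mu]_(x in D) (f x)%:E)%E.
have I0 : (0 <= I)%E by apply: integral_ge0 => x Dx; rewrite lee_fin f0.
have fL_ge0 x : L x -> (0 <= (f x)%:E)%E by move=> /LD Dx; rewrite lee_fin f0.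
have mfL : measurable_fun L (EFin \o f).
  exact/measurable_EFinP/(measurable_funS mD LD mf).
have IL0 : (0 <= \int[mu]_(x in L) (f x)%:E)%E by exact: integral_ge0.
have ILI : (\int[mu]_(x in L) (f x)%:E <= I)%E.
  by apply: ge0_subset_integral => //; exact/measurable_EFinP.
under eq_integral => x _ do rewrite mulrC EFinM.
rewrite ge0_integralZl_EFin ?invr_ge0 ?fine_ge0 //.
have [I_eq0|I_neq0] := eqVneq (fine I) 0.
  have IE : I = 0%E by rewrite -[I]fineK ?I_eq0 // ge0_fin_numE.
  suff -> : (\int[mu]_(x in L) (f x)%:E = 0)%E by rewrite mule0.
  by apply/eqP; rewrite eq_le IL0 andbT -IE.
split=> [|->]; last by rewrite mule0.
by move/eqP; rewrite mule_eq0 eqe invr_eq0 (negbTE I_neq0) => /eqP.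
Qed.

End normalized_integral.

Lemma signaling_scheme_bounds (R : realType) (n : nat) (q1 q2 : R)
    (pi : R -> option 'I_n -> R) (i : 'I_n) (q : R) :
  signaling_scheme q1 q2 pi -> q1 <= q <= q2 -> 0 <= pi q (Some i) <= 1.
Proof.
move=> hpi /hpi[pi_ge0 pi_sum1]; rewrite pi_ge0 -pi_sum1 /=.
rewrite (bigD1 i) //= -addrA lerDl addr_ge0 //.
by apply: sumr_ge0 => j _; exact: pi_ge0.
Qed.

Lemma itvcc_setI_setD1 (R : realType) (b a c : R) :
  (`[b, a] `&` `[b, c]) `\ a = `[b, c] `&` [set x | x < a].
Proof.
apply/seteqP; split=> x /=; rewrite !in_itv /=.
- move=> [[/andP[bx xa] bxc] /eqP xNa]; split=> //.
  by rewrite lt_neqAle xNa.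
- move=> [/andP[bx xc] xa]; rewrite bx xc (ltW xa); split=> // xa'.
  by rewrite xa' ltxx in xa.
Qed.

Lemma itvcc_setI_ge (R : realType) (b a c : R) :
  `[a, c] `&` `[b, c] = `[b, c] `&` [set x | a <= x].
Proof.
apply/seteqP; split=> x /=; rewrite !in_itv /=.
- by move=> [/andP[ax _] bxc].
- by move=> [/andP[bx xc] ax]; rewrite ax bx xc.
Qed.

Section posterior.
Context {R : realType} {n : nat} {q1 q2 : R} {g : R -> R}.
Context { pi : R -> option 'I_n -> R }.
Hypothesis hg : density_on q1 q2 g.
Hypothesis mpi : forall s, measurable_fun `[q1, q2] (fun q => pi q s).
Hypothesis hpi : signaling_scheme q1 q2 pi.
Local Notation mu := (@lebesgue_measure R).
Local Notation Q := (`[q1, q2]%classic : set R).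

Lemma integral_posterior_eq0 (h : R -> R) (L : set R) :
  measurable_fun Q h -> (forall q, Q q -> 0 <= h q <= 1) ->
  measurable L -> L `<=` Q ->
  (\int[mu]_(q in L) (h q * g q / fine (\int[mu]_(x in Q) (h x * g x)%:E))%:E
     = 0)%E <->
  (\int[mu]_(q in L) (h q * g q)%:E = 0)%E.
Proof.
case: hg => mg [g_ge0 g_int1] mh h01 mL LQ.
have hg_ge0 q : Q q -> 0 <= h q * g q.
  by move=> Qq; have /andP[h_ge0 _] := h01 q Qq; rewrite mulr_ge0 ?g_ge0.
apply: integral_normalized_eq0 => //; first exact: measurable_funM.
apply: (le_lt_trans _ (ltey 1)); rewrite -g_int1.
apply: ge0_le_integral => //; [|exact/measurable_EFinP|].
- by apply/measurable_EFinP; exact: measurable_funM.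
- move=> q Qq; have /andP[_ h_le1] := h01 q Qq.
  by rewrite lee_fin ler_piMl ?g_ge0.
Qed.

Variable i : 'I_n.

Let signal_bounds q : Q q -> 0 <= pi q (Some i) <= 1.
Proof. by rewrite /= in_itv; exact: signaling_scheme_bounds. Qed.

Lemma integral_posterior1_eq0 (a : R) :
  (\int[mu]_(q in Q `&` [set q | (q < a)%R]) (posterior1 q1 q2 g pi i q)%:E = 0)%E
  <-> (\int[mu]_(q in `[q1, a] `&` Q) (pi q (Some i) * g q)%:E = 0)%E.
Proof.
have mQa : measurable (Q `&` [set q | q < a]).
  by rewrite -itvcc_setI_setD1; apply: measurableD => //; exact: measurableI.
have mpig : measurable_fun Q (fun q => pi q (Some i) * g q).
  exact: measurable_funM (mpi _) hg.1.
rewrite /posterior1 (integral_posterior_eq0 _ _ (mpi _) signal_bounds mQa) //.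
rewrite -itvcc_setI_setD1 integral_setD1 ?itvcc_setI_setD1 //.
by apply/measurable_EFinP; apply: measurable_funS mpig => //; exact: subIsetl.
Qed.

Lemma integral_posterior0_eq0 (a : R) :
  (\int[mu]_(q in Q `&` [set q | (a <= q)%R]) (posterior0 q1 q2 g pi i q)%:E = 0)%E
  <-> (\int[mu]_(q in `[a, q2] `&` Q) ((1 - pi q (Some i)) * g q)%:E = 0)%E.
Proof.
have m1pi : measurable_fun Q (fun q => 1 - pi q (Some i)).
  exact: measurable_funB (mpi _).
have pi01 q : Q q -> 0 <= 1 - pi q (Some i) <= 1.
  by move/signal_bounds/andP => [pi_ge0 pi_le1]; rewrite subr_ge0 pi_le1 gerBl.
have mQa : measurable (Q `&` [set q | a <= q]).
  by rewrite -itvcc_setI_ge; exact: measurableI.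
by rewrite itvcc_setI_ge /posterior0 (integral_posterior_eq0 _ _ m1pi pi01 mQa).
Qed.

End posterior.

Theorem mainTheorem7 (R : realType) (n : nat) (q1 q2 : R) (g : R -> R)
    (v vinv : 'I_n -> R -> R) (pi : R -> option 'I_n -> R) (p : R) :
  q1 < q2 ->
  density_on q1 q2 g ->
  (forall s, measurable_fun `[q1, q2] (fun q => pi q s)) ->
  signaling_scheme q1 q2 pi ->
  (forall i, {homo v i : x y / x < y}) ->
  (forall i, v i (vinv i p) = p) ->
  obedient q1 q2 g v pi p <->
  (forall i : 'I_n,
    (\int[@lebesgue_measure R]_(q in `[q1, vinv i p] `&` `[q1, q2])
        (pi q (Some i) * g q)%:E = 0)%E /\
    (\int[@lebesgue_measure R]_(q in `[vinv i p, q2] `&` `[q1, q2])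
        ((1 - pi q (Some i)) * g q)%:E = 0)%E).
Proof.
move=> _ hg mpi hpi v_homo v_vinv.
have unwilling i : [set q | v i q < p] = [set q | q < vinv i p].
  by apply/funext => q; rewrite /= -{1}(v_vinv i) (leW_mono (le_mono (v_homo i))).
have willing i : [set q | p <= v i q] = [set q | vinv i p <= q].
  by apply/funext => q; rewrite /= -{1}(v_vinv i) (le_mono (v_homo i)).
have post1 := integral_posterior1_eq0 hg mpi hpi.
have post0 := integral_posterior0_eq0 hg mpi hpi.
split=> obd i; have [obd1 obd0] := obd i.
- by rewrite unwilling willing in obd1 obd0; split; [exact/post1|exact/post0].
- by rewrite /obedient unwilling willing; split; [exact/post1|exact/post0].
Qed.
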